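(* Let $r\ge1$ and let $m_1,\ldots,m_r\ge 2$ be integers. Then for every $n\ge 0$ the coefficient of $q^n$ in the power series $H_{(m_1,\ldots,m_r)}$ is divisible by $\prod_{t=1}^{r}\mathcal{M}(m_t,t)$.
   Context: For $m\ge2$, $U_m$ is the linear operator on $\mathbb{Z}[[q]]$ given by $U_m\big(\sum_{n\ge0}a(n)q^n\big)=\sum_{n\ge0}a(mn)q^n$. Define $H_{\emptyset}:=q/(1-q)$ and recursively $H_{(m_1,\ldots,m_r)}:=U_{m_r}\Big(\frac{1}{1-q}H_{(m_1,\ldots,m_{r-1})}\Big)$ for $r\ge1$. For positive integers $m,t$, $\mathcal{M}(m,t):=\dfrac{m}{\gcd\big(m,\operatorname{lcm}(1,2,\ldots,t)\big)}$. *)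

(* Formal power series in Z[[q]] are represented by their
   coefficient sequences  nat -> int. *)
From mathcomp Require Import all_boot all_order all_algebra.
Set Implicit Arguments. Unset Strict Implicit. Unset Printing Implicit Defensive.
Import GRing.Theory Num.Theory.

Definition pseries := nat -> int.

Definition Uop (m : nat) (f : pseries) : pseries := fun n => f (m * n)%N.

(* multiplication by 1/(1-q) = 1 + q + q^2 + ... : partial sums *)
Definition mul_geom (f : pseries) : pseries :=
  fun n => (\sum_(i < n.+1) f i)%R.

(* H_empty = q/(1-q) = q + q^2 + ... *)
Definition H_empty : pseries := fun n => if n == 0%N then 0%R else 1%R.

(* H_(m_1,...,m_r) = U_{m_r}( 1/(1-q) * H_(m_1,...,m_{r-1}) ) ;
   the list ms = [:: m_1; ...; m_r] is processed left to right. *)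
Definition H (ms : seq nat) : pseries :=
  foldl (fun h m => Uop m (mul_geom h)) H_empty ms.

Definition lcm_upto (t : nat) : nat := \big[lcmn/1%N]_(1 <= i < t.+1) i.

Definition Mfac (m t : nat) : nat := m %/ gcdn m (lcm_upto t).

(* Let Δ be the forward difference operator. If Δ^(d+1) f = 0, Newton's
   forward formula gives f N = sum_(k <= d) C(N, k) (Δ^k f)(0). Hence, when
   moreover f 0 = 0, every f (m n) is an integer combination of the C(m n, k)
   with 1 <= k <= d, and k C(m n, k) = m n C(m n - 1, k - 1) shows that
   m / gcd(m, lcm(1..d)) divides each of them. Dividing out this factor leaves
   a sequence of the same kind, while multiplication by 1/(1-q) raises the
   degree by one and keeps the value 0 at 0. Since (1/(1-q)) H_() = sum n q^n
   has degree 1, induction along (m_1, ..., m_r) shows that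
   (1/(1-q)) H_(m_1, ..., m_r) is prod_t M(m_t, t) times such a sequence of
   degree r + 1, and applying U_(m_(r+1)) gives the theorem. *)
From mathcomp Require Import all_boot all_order all_algebra.
From mathcomp Require Import ring.
Import GRing.Theory Num.Theory.
Local Open Scope ring_scope.

Fixpoint fdiff (k : nat) (f : pseries) (n : nat) : int :=
  if k is k'.+1 then fdiff k' f n.+1 - fdiff k' f n else f n.

Definition polyfun (d : nat) (f : pseries) := forall n, fdiff d.+1 f n = 0.

Lemma eq_fdiff k {f g : pseries} : f =1 g -> fdiff k f =1 fdiff k g.
Proof. by move=> fg; elim: k => [|k IH] n //=; rewrite !IH. Qed.

Lemma fdiffD a b f n : fdiff (a + b) f n = fdiff a (fdiff b f) n.
Proof. by elim: a n => [|a IH] n //=; rewrite !IH. Qed.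

Lemma fdiffSr k f n : fdiff k.+1 f n = fdiff k (fdiff 1 f) n.
Proof. by rewrite -addn1 fdiffD. Qed.

Lemma fdiff0 k n : fdiff k (fun _ => 0) n = 0.
Proof. by elim: k n => [|k IH] n //=; rewrite !IH subrr. Qed.

Lemma fdiff_shift k f n : fdiff k (fun i => f i.+1) n = fdiff k f n.+1.
Proof. by elim: k n => [|k IH] n //=; rewrite !IH. Qed.

Lemma fdiff_sum k (I : finType) (F : I -> pseries) n :
  fdiff k (fun i => \sum_(j : I) F j i) n = \sum_(j : I) fdiff k (F j) n.
Proof. by elim: k n => [|k IH] n //=; rewrite !IH -sumrB. Qed.

Lemma fdiff_mull k c f n : fdiff k (fun i => c * f i) n = c * fdiff k f n.
Proof. by elim: k n => [|k IH] n //=; rewrite !IH mulrBr. Qed.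

Lemma polyfun_fdiff {d f} e n : polyfun d f -> (d < e)%N -> fdiff e f n = 0.
Proof.
by move=> hf de; rewrite -(subnK de) fdiffD (eq_fdiff _ hf) fdiff0.
Qed.

Lemma newton_forward f N K : (N < K)%N ->
  f N = \sum_(k < K) 'C(N, k)%:R * fdiff k f 0.
Proof.
elim: N f K => [|N IH] f [|K] // ltNK.
  rewrite big_ord_recl bin0 mul1r big1 ?addr0 // => i _.
  by rewrite bin0n mul0r.
have -> : f N.+1 = f N + fdiff 1 f N by rewrite /= addrC subrK.
rewrite (IH f K.+1) ?(ltn_trans _ ltNK) // (IH (fdiff 1 f) K.+1) ?(ltn_trans _ ltNK) //.
rewrite [X in _ + X]big_ord_recr /= bin_small // mul0r addr0.
rewrite [in RHS]big_ord_recl [in LHS]big_ord_recl !bin0 -addrA -big_split.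
congr (_ + _); apply: eq_bigr => i _.
rewrite /bump /= binS natrD mulrDl; congr (_ + _).
by rewrite -[RHS]/(_ * fdiff i.+1 f 0) fdiffSr.
Qed.

Lemma polyfun_newton {d f} : polyfun d f ->
  forall N, f N = \sum_(k < d.+1) 'C(N, k)%:R * fdiff k f 0.
Proof.
move=> hf N; rewrite (@newton_forward f N (d.+1 + N)); last by rewrite addSn ltnS leq_addl.
rewrite big_split_ord -[RHS]addr0; congr (_ + _); apply: big1 => i _.
by rewrite (polyfun_fdiff _ _ hf) ?mulr0 ?leq_addr.
Qed.

Lemma polyfun_bin_mul m k : polyfun k (fun n => 'C(m * n, k)%:R).
Proof.
elim/ltn_ind: k => k IH n; rewrite fdiffSr.
have diff_bin i : fdiff 1 (fun n => 'C(m * n, k)%:R) i =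
    \sum_(j < k) 'C(m, k - j)%:R * 'C(m * i, j)%:R.
  rewrite /= mulnS addnC -binomial.Vandermonde big_ord_recr /= subnn bin0 muln1.
  by rewrite natrD addrK natr_sum; apply: eq_bigr => j _; rewrite natrM mulrC.
rewrite (eq_fdiff _ diff_bin) fdiff_sum big1 // => j _.
by rewrite fdiff_mull (polyfun_fdiff _ _ (IH j _)) ?mulr0.
Qed.

Lemma polyfun_comp_mul m r g : polyfun r g -> polyfun r (fun n => g (m * n)%N).
Proof.
move=> hg n.
have newton_mul i : g (m * i)%N = \sum_(k < r.+1) fdiff k g 0 * 'C(m * i, k)%:R.
  by rewrite (polyfun_newton hg); apply: eq_bigr => k _; rewrite mulrC.
rewrite (eq_fdiff _ newton_mul) fdiff_sum big1 // => k _.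
by rewrite fdiff_mull (polyfun_fdiff _ _ (polyfun_bin_mul m k)) ?mulr0.
Qed.

Lemma polyfun_mull_inv d (c : int) h : c != 0 ->
  polyfun d (fun n => c * h n) -> polyfun d h.
Proof.
move=> c0 hch n; move: (hch n); rewrite fdiff_mull => /eqP.
by rewrite mulf_eq0 (negbTE c0) => /eqP.
Qed.

Lemma mul_geom0 h : mul_geom h 0%N = h 0%N.
Proof. by rewrite /mul_geom big_ord1. Qed.

Lemma polyfun_mul_geom r h : polyfun r h -> polyfun r.+1 (mul_geom h).
Proof.
move=> hr n; rewrite fdiffSr.
have diff_mul_geom i : fdiff 1 (mul_geom h) i = h i.+1.
  by rewrite /= /mul_geom [X in X - _]big_ord_recr /= addrC addrK.
by rewrite (eq_fdiff _ diff_mul_geom) fdiff_shift hr.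
Qed.

Lemma lcm_upto_gt0 t : (0 < lcm_upto t)%N.
Proof.
rewrite /lcm_upto big_add1; apply: (big_ind (fun x => 0 < x)%N) => // x y.
by rewrite lcmn_gt0 => -> ->.
Qed.

Lemma dvdn_lcm_upto t k : (0 < k <= t)%N -> (k %| lcm_upto t)%N.
Proof.
move=> kt; rewrite /lcm_upto (bigD1_seq k) ?iota_uniq ?dvdn_lcml //.
by rewrite mem_index_iota ltnS.
Qed.

Lemma Mfac_gt0 m t : (0 < m)%N -> (0 < Mfac m t)%N.
Proof.
move=> m0; rewrite /Mfac divn_gt0 ?gcdn_gt0 ?m0 //.
exact/dvdn_leq/dvdn_gcdl.
Qed.

Lemma Mfac_dvd_bin m t k n : (0 < k <= t)%N -> (Mfac m t %| 'C(m * n, k))%N.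
Proof.
case: k => // k kt; set L := lcm_upto t; set C := 'C(m * n, k.+1).
have m_dvd_LC : (m %| L * C)%N.
  apply: dvdn_trans (_ : k.+1 * C %| L * C)%N.
    by rewrite /C -mul_bin_diag -mulnA dvdn_mulr.
  by rewrite dvdn_mul ?dvdn_lcm_upto.
have m_dvd_gC : (m %| gcdn m L * C)%N.
  by rewrite muln_gcdl dvdn_gcd m_dvd_LC dvdn_mulr.
have g0 : (0 < gcdn m L)%N by rewrite gcdn_gt0 lcm_upto_gt0 orbT.
by rewrite -(@dvdn_pmul2l (gcdn m L)) // mulnC divnK ?dvdn_gcdl.
Qed.

Lemma Mfac_dvdz_polyfun_mul m r g n : g 0%N = 0 -> polyfun r g ->
  ((Mfac m r)%:Z %| g (m * n)%N)%Z.
Proof.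
move=> g0 hg; rewrite (polyfun_newton hg (m * n)).
apply: rpred_sum => -[[|k] kr] _ /=; first by rewrite g0 mulr0 dvdz0.
by rewrite dvdz_mulr // natz dvdzE Mfac_dvd_bin.
Qed.

Definition scaled_polyfun (c d : nat) (f : pseries) :=
  exists g, [/\ g 0%N = 0, polyfun d g & forall n, f n = c%:Z * g n].

Lemma scaled_polyfun_dvdz c d f n : scaled_polyfun c d f -> (c%:Z %| f n)%Z.
Proof. by case=> g [_ _ ->]; rewrite dvdz_mulr. Qed.

Lemma scaled_polyfun_mul_geom c d f :
  scaled_polyfun c d f -> scaled_polyfun c d.+1 (mul_geom f).
Proof.
case=> g [g0 hg fg]; exists (mul_geom g); split.
- by rewrite mul_geom0.
- exact: polyfun_mul_geom.
- by move=> n; rewrite /mul_geom mulr_sumr; apply: eq_bigr => i _.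
Qed.

Lemma scaled_polyfun_Uop m c r f : (0 < m)%N ->
  scaled_polyfun c r f -> scaled_polyfun (c * Mfac m r) r (Uop m f).
Proof.
move=> m0 [g [g0 hg fg]]; set M := (Mfac m r)%:Z.
have gmK n : g (m * n)%N = M * (g (m * n)%N %/ M)%Z.
  by rewrite mulrC divzK // Mfac_dvdz_polyfun_mul.
exists (fun n => (g (m * n)%N %/ M)%Z); split.
- by rewrite muln0 g0 div0z.
- apply: (@polyfun_mull_inv _ M); first by rewrite eqz_nat -lt0n Mfac_gt0.
  by move=> n; rewrite -(eq_fdiff _ gmK); apply: polyfun_comp_mul.
- by move=> n; rewrite /Uop fg {1}gmK PoszM mulrA.
Qed.

Definition Mfac_prod (s : seq nat) : nat :=
  \prod_(t < size s) Mfac (nth 0%N s t) t.+1.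

Lemma Mfac_prod_rcons s m :
  Mfac_prod (rcons s m) = (Mfac_prod s * Mfac m (size s).+1)%N.
Proof.
rewrite /Mfac_prod size_rcons big_ord_recr /= nth_rcons ltnn eqxx.
by congr (_ * _)%N; apply: eq_bigr => i _; rewrite nth_rcons ltn_ord.
Qed.

Lemma H_rcons s m : H (rcons s m) = Uop m (mul_geom (H s)).
Proof. by rewrite /H foldl_rcons. Qed.

Lemma mul_geom_H_nil n : mul_geom (H [::]) n = n%:R.
Proof.
elim: n => [|n IH]; first by rewrite mul_geom0.
by rewrite /mul_geom big_ord_recr /= -/(mul_geom _ _) IH -natr1.
Qed.

Lemma scaled_polyfun_mul_geom_H s : all (fun m => 0 < m)%N s ->
  scaled_polyfun (Mfac_prod s) (size s).+1 (mul_geom (H s)).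
Proof.
elim/last_ind: s => [_|s m IH].
  exists (fun n => n%:R); split => // [n|n].
    by rewrite /= -!natr1; ring.
  by rewrite mul_geom_H_nil /Mfac_prod big_ord0 mul1r.
rewrite all_rcons => /andP[m0 /IH hs]; rewrite size_rcons H_rcons Mfac_prod_rcons.
exact/scaled_polyfun_mul_geom/scaled_polyfun_Uop.
Qed.

Theorem lemma2p8 (ms : seq nat) :
  (0 < size ms)%N ->
  all (fun m => 2 <= m)%N ms ->
  forall n : nat,
    (((\prod_(t < size ms) Mfac (nth 0%N ms t) t.+1)%N)%:Z %| H ms n)%Z.
Proof.
case/lastP: ms => // s m _ hms n.
have pos : all (fun m => 0 < m)%N (rcons s m).
  by apply: sub_all hms => k; apply: leq_trans.
move: pos; rewrite all_rcons => /andP[m0 /scaled_polyfun_mul_geom_H hs].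
rewrite -/(Mfac_prod _) Mfac_prod_rcons H_rcons.
exact/scaled_polyfun_dvdz/scaled_polyfun_Uop.
Qed.
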